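(* The center of $U_3$ is $$Z(U_3)=\{(x_1+f_1,\,x_2,\,x_3)\mid f_1=f_1(x_2,x_3)\in S\}.$$
   Context: $K$ is a field of characteristic zero, $A_3=K\langle x_1,x_2,x_3\rangle$ the free associative $K$-algebra with unity. $U_3$ is the group of unitriangular automorphisms of $A_3$: all automorphisms $(x_1+f_1,\,x_2+f_2,\,x_3+f_3)$ (meaning $x_i\mapsto x_i+f_i$) with $f_1\in K\langle x_2,x_3\rangle$, $f_2\in K\langle x_3\rangle$, $f_3\in K$. $S=\{f\in K\langle x_2,x_3\rangle\mid f(x_2+g(x_3),\,x_3+h)=f(x_2,x_3)\text{ for all }g(x_3)\in K\langle x_3\rangle,\ h\in K\}$. *)

(* Free associative algebra K<x1,x2,x3> modelled as formal
   finite linear combinations of words; two such combinations denote the same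
   element of A_3 iff all their word-coefficients agree ([peq]). *)
From HB Require Import structures.
From mathcomp Require Import all_boot all_order all_algebra.
Set Implicit Arguments. Unset Strict Implicit. Unset Printing Implicit Defensive.
Import Order.TTheory GRing.Theory Num.Theory.
Local Open Scope ring_scope.

Section FreeAlg.
Variable K : fieldType.

(* letters: (0 : 'I_3) = x1, 1 = x2, 2 = x3 *)
Definition word := seq 'I_3.
Definition ncpoly := seq (K * word).

Definition coef (p : ncpoly) (w : word) : K :=
  \sum_(m <- p) (if m.2 == w then m.1 else 0).

Definition peq (p q : ncpoly) : Prop := forall w, coef p w = coef q w.

Definition padd (p q : ncpoly) : ncpoly := p ++ q.
Definition pscale (c : K) (p : ncpoly) : ncpoly := [seq (c * m.1, m.2) | m <- p].
Definition pmul (p q : ncpoly) : ncpoly :=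
  [seq (a.1 * b.1, a.2 ++ b.2) | a <- p, b <- q].
Definition pconst (c : K) : ncpoly := [:: (c, [::])].
Definition pX (i : 'I_3) : ncpoly := [:: (1, [:: i])].

Definition wsubst (w : word) (g : 'I_3 -> ncpoly) : ncpoly :=
  foldr (fun i acc => pmul (g i) acc) (pconst 1) w.
Definition subst (p : ncpoly) (g : 'I_3 -> ncpoly) : ncpoly :=
  flatten [seq pscale m.1 (wsubst m.2 g) | m <- p].

Definition in_K23 (p : ncpoly) : Prop :=
  forall w, coef p w != 0 -> all (fun i : 'I_3 => (i : nat) != 0%N) w.
Definition in_K3 (p : ncpoly) : Prop :=
  forall w, coef p w != 0 -> all (fun i : 'I_3 => (i : nat) == 2%N) w.
Definition in_Kconst (p : ncpoly) : Prop :=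
  forall w, coef p w != 0 -> w = [::].

Definition x1 : 'I_3 := @Ordinal 3 0 isT.
Definition x2 : 'I_3 := @Ordinal 3 1 isT.
Definition x3 : 'I_3 := @Ordinal 3 2 isT.

(* An endomorphism phi of A_3 is given by the images phi i of the generators.
   Composition: (phi o psi)(x_i) = phi(psi(x_i)) = subst (psi i) phi. *)
Definition is_automorphism (phi : 'I_3 -> ncpoly) : Prop :=
  exists psi : 'I_3 -> ncpoly,
    forall i, peq (subst (psi i) phi) (pX i) /\ peq (subst (phi i) psi) (pX i).

Definition in_U3 (phi : 'I_3 -> ncpoly) : Prop :=
  is_automorphism phi /\
  exists f1 f2 f3 : ncpoly,
    [/\ in_K23 f1, in_K3 f2 & in_Kconst f3] /\
    [/\ peq (phi x1) (padd (pX x1) f1),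
        peq (phi x2) (padd (pX x2) f2) &
        peq (phi x3) (padd (pX x3) f3)].

Definition endo_eq (phi psi : 'I_3 -> ncpoly) : Prop := forall i, peq (phi i) (psi i).
Definition comp (phi psi : 'I_3 -> ncpoly) : 'I_3 -> ncpoly :=
  fun i => subst (psi i) phi.

Definition in_center_U3 (phi : 'I_3 -> ncpoly) : Prop :=
  in_U3 phi /\ forall psi, in_U3 psi -> endo_eq (comp phi psi) (comp psi phi).

Definition in_S (f : ncpoly) : Prop :=
  in_K23 f /\
  forall g h : ncpoly, in_K3 g -> in_Kconst h ->
    peq (subst f (fun i => if i == x1 then pX x1
                           else if i == x2 then padd (pX x2) g
                           else padd (pX x3) h)) f.

End FreeAlg.

From Pilot Require Import Defs.
From HB Require Import structures.
From mathcomp Require Import all_boot all_order all_algebra.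
Import GRing.Theory.
Local Open Scope ring_scope.

Set Implicit Arguments. Unset Strict Implicit. Unset Printing Implicit Defensive.

(* Commuting with the elementary automorphisms x1 |-> x1 + x2 and
   x2 |-> x2 + x3 forces f2 = f3 = 0, and commuting with x2 |-> x2 + g(x3) and
   x3 |-> x3 + c forces f1 to be fixed by both substitutions, i.e. f1 \in S.
   Conversely (x1 + f1, x2, x3) with f1 \in S commutes with any
   (x1 + a, x2 + b, x3 + c): a does not involve x1, so it is fixed by the first
   map, and f1 is fixed by the second because it does not involve x1 either. *)

Section FormalSums.
Variable K : fieldType.
Implicit Types p q r : ncpoly K.

Lemma coef_nil w : coef ([::] : ncpoly K) w = 0.
Proof. by rewrite /coef big_nil. Qed.

Lemma coef_cons (m : K * word) p w :
  coef (m :: p) w = (if m.2 == w then m.1 else 0) + coef p w.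
Proof. by rewrite /coef big_cons. Qed.

Lemma coef_padd p q w : coef (padd p q) w = coef p w + coef q w.
Proof. by rewrite /coef big_cat. Qed.

Lemma coef_pscale c p w : coef (pscale c p) w = c * coef p w.
Proof.
rewrite /coef big_map mulr_sumr; apply: eq_bigr => m _ /=.
by case: ifP; rewrite ?mulr0.
Qed.

Lemma coef_pX i w : coef (pX K i) w = (if [:: i] == w then 1 else 0).
Proof. by rewrite coef_cons coef_nil addr0. Qed.

Lemma coefE p w : coef p w = \sum_(m <- p) m.1 * (if m.2 == w then 1 else 0).
Proof. by apply: eq_bigr => m _; case: ifP; rewrite ?mulr1 ?mulr0. Qed.

Lemma peq_sym p q : peq p q -> peq q p.
Proof. by move=> H w; rewrite H. Qed.

Lemma peq_trans p q r : peq p q -> peq q r -> peq p r.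
Proof. by move=> H1 H2 w; rewrite H1 H2. Qed.

Lemma padd_nil p : peq p (padd p [::]).
Proof. by move=> w; rewrite coef_padd coef_nil addr0. Qed.

Lemma sum_coef_eval p (F : word -> K) (s : seq word) : uniq s ->
  {subset [seq m.2 | m <- p] <= s} ->
  \sum_(m <- p) m.1 * F m.2 = \sum_(u <- s) coef p u * F u.
Proof.
move=> us; elim: p => [|a p IH] sub.
  by rewrite big_nil big1 // => u _; rewrite coef_nil mul0r.
rewrite big_cons IH; last by move=> u Hu; apply: sub; rewrite /= inE Hu orbT.
have a_s : a.2 \in s by apply: sub; rewrite /= inE eqxx.
under [RHS]eq_bigr => u _ do rewrite coef_cons mulrDl.
rewrite big_split /=; congr (_ + _).
rewrite (bigD1_seq a.2) //= eqxx big1 ?addr0 // => u /negbTE Hu.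
by rewrite eq_sym Hu mul0r.
Qed.

Lemma eq_sum_support p (F G : word -> K) :
  (forall w, coef p w != 0 -> F w = G w) ->
  \sum_(m <- p) m.1 * F m.2 = \sum_(m <- p) m.1 * G m.2.
Proof.
move=> FG; set s := undup [seq m.2 | m <- p].
have sub : {subset [seq m.2 | m <- p] <= s} by move=> u; rewrite mem_undup.
rewrite !(sum_coef_eval _ (undup_uniq _) sub); apply: eq_bigr => u _.
by have [->|/FG ->] := eqVneq (coef p u) 0; rewrite ?mul0r.
Qed.

Lemma eq_sum_peq p q (F : word -> K) : peq p q ->
  \sum_(m <- p) m.1 * F m.2 = \sum_(m <- q) m.1 * F m.2.
Proof.
move=> H; set s := undup [seq m.2 | m <- p ++ q].
have sp : {subset [seq m.2 | m <- p] <= s}.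
  by move=> u Hu; rewrite mem_undup map_cat mem_cat Hu.
have sq : {subset [seq m.2 | m <- q] <= s}.
  by move=> u Hu; rewrite mem_undup map_cat mem_cat Hu orbT.
rewrite (sum_coef_eval F (undup_uniq _) sp) (sum_coef_eval F (undup_uniq _) sq).
by apply: eq_bigr => u _; rewrite H.
Qed.

Lemma coef_pmul p q w : coef (pmul p q) w =
  \sum_(a <- p) a.1 * \sum_(b <- q) b.1 * (if a.2 ++ b.2 == w then 1 else 0).
Proof.
rewrite /coef /pmul big_allpairs_dep; apply: eq_bigr => a _; rewrite mulr_sumr.
by apply: eq_bigr => b _ /=; case: ifP => _; rewrite ?mulr1 ?mulr0 ?mulrA.
Qed.

Lemma coef_pmul_r p q w : coef (pmul p q) w =
  \sum_(b <- q) b.1 * \sum_(a <- p) a.1 * (if a.2 ++ b.2 == w then 1 else 0).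
Proof.
rewrite coef_pmul; under eq_bigr => a _ do rewrite mulr_sumr.
rewrite exchange_big; apply: eq_bigr => b _; rewrite mulr_sumr.
by apply: eq_bigr => a _; rewrite mulrCA.
Qed.

Lemma pmul_peq p p' q q' : peq p p' -> peq q q' -> peq (pmul p q) (pmul p' q').
Proof.
move=> Hp Hq w; transitivity (coef (pmul p' q) w).
  rewrite !coef_pmul.
  exact: (eq_sum_peq (fun u => \sum_(b <- q) b.1 * (if u ++ b.2 == w then 1 else 0)) Hp).
rewrite !coef_pmul_r.
exact: (eq_sum_peq (fun v => \sum_(a <- p') a.1 * (if a.2 ++ v == w then 1 else 0)) Hq).
Qed.

Lemma pmul1p q : peq (pmul (pconst 1) q) q.
Proof.
move=> w; rewrite coef_pmul big_cons big_nil addr0 mul1r coefE.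
exact: eq_bigr.
Qed.

Lemma pmulA p q r : peq (pmul (pmul p q) r) (pmul p (pmul q r)).
Proof.
move=> w; rewrite /coef /pmul !big_allpairs_dep.
under [RHS]eq_bigr => a _ do rewrite big_allpairs_dep.
apply: eq_bigr => a _; apply: eq_bigr => b _; apply: eq_bigr => c _ /=.
by rewrite catA mulrA.
Qed.

End FormalSums.

Section Substitution.
Variable K : fieldType.
Implicit Types (p q : ncpoly K) (g h : 'I_3 -> ncpoly K).

Lemma wsubst_peq w g h : (forall i, i \in w -> peq (g i) (h i)) ->
  peq (wsubst w g) (wsubst w h).
Proof.
elim: w => [|i w IH] gh //=; apply: pmul_peq; first by apply: gh; rewrite inE eqxx.
by apply: IH => j Hj; apply: gh; rewrite inE Hj orbT.
Qed.

Lemma sum_subst p g (G : word -> K) :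
  \sum_(x <- subst p g) x.1 * G x.2 =
  \sum_(m <- p) m.1 * \sum_(x <- wsubst m.2 g) x.1 * G x.2.
Proof.
rewrite /subst big_flatten big_map; apply: eq_bigr => m _.
by rewrite /pscale big_map mulr_sumr; apply: eq_bigr => x _ /=; rewrite mulrA.
Qed.

Lemma coef_subst p g w :
  coef (subst p g) w = \sum_(m <- p) m.1 * coef (wsubst m.2 g) w.
Proof.
rewrite coefE (sum_subst p g (fun v => if v == w then 1 else 0)).
by apply: eq_bigr => m _; rewrite -coefE.
Qed.

Lemma subst_peql p q g : peq p q -> peq (subst p g) (subst q g).
Proof.
by move=> pq w; rewrite !coef_subst (eq_sum_peq (fun u => coef (wsubst u g) w) pq).
Qed.

Lemma subst_peq_support p g h :
  (forall w, coef p w != 0 -> peq (wsubst w g) (wsubst w h)) ->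
  peq (subst p g) (subst p h).
Proof.
move=> gh u; rewrite !coef_subst.
exact: (@eq_sum_support _ p (fun v => coef (wsubst v g) u)
  (fun v => coef (wsubst v h) u) (fun w nz => gh w nz u)).
Qed.

Lemma subst_peqr p g h : (forall i, peq (g i) (h i)) -> peq (subst p g) (subst p h).
Proof. by move=> gh; apply: subst_peq_support => w _; apply: wsubst_peq. Qed.

Lemma subst_padd p q g : subst (padd p q) g = padd (subst p g) (subst q g).
Proof. by rewrite /subst /padd map_cat flatten_cat. Qed.

Lemma subst_pX i g : peq (subst (pX K i) g) (g i).
Proof.
move=> w; rewrite coef_subst big_cons big_nil addr0 mul1r coef_pmul coefE /=.
by apply: eq_bigr => a _; rewrite big_cons big_nil /= cats0 mul1r addr0.
Qed.

Lemma coef_subst_pXD i p g w :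
  coef (subst (padd (pX K i) p) g) w = coef (g i) w + coef (subst p g) w.
Proof. by rewrite subst_padd coef_padd subst_pX. Qed.

Lemma wsubst_pX w : peq (wsubst w (@pX K)) [:: (1, w)].
Proof.
elim: w => [|i w IH] //=.
apply: peq_trans (pmul_peq (fun u => erefl (coef (pX K i) u)) IH) _.
move=> u; rewrite coef_pmul !big_cons !big_nil /= !addr0 !mul1r coef_cons coef_nil.
by case: ifP; rewrite addr0.
Qed.

Lemma subst_pX_id p : peq (subst p (@pX K)) p.
Proof.
move=> u; rewrite coef_subst coefE; apply: eq_bigr => m _.
by rewrite wsubst_pX coef_cons coef_nil addr0.
Qed.

Lemma wsubst_cat u v g : peq (wsubst (u ++ v) g) (pmul (wsubst u g) (wsubst v g)).
Proof.
elim: u => [|i u IH] /=; first exact/peq_sym/pmul1p.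
exact: peq_trans (pmul_peq (fun w => erefl) IH) (peq_sym (pmulA _ _ _)).
Qed.

Lemma subst_pmul p q g : peq (subst (pmul p q) g) (pmul (subst p g) (subst q g)).
Proof.
move=> w; rewrite coef_pmul coef_subst /pmul big_allpairs_dep.
rewrite (sum_subst p g (fun v => \sum_(b <- subst q g) b.1 * (if v ++ b.2 == w then 1 else 0))).
apply: eq_bigr => a _ /=.
under eq_bigr => b _ do rewrite (wsubst_cat a.2 b.2 g w) coef_pmul.
rewrite [RHS]mulr_sumr.
under [RHS]eq_bigr => x _ do
  rewrite (sum_subst q g (fun v => if x.2 ++ v == w then 1 else 0)) mulr_sumr mulr_sumr.
rewrite [RHS]exchange_big; apply: eq_bigr => b _ /=.
rewrite mulr_sumr; apply: eq_bigr => x _.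
by rewrite -!mulrA; congr (_ * _); rewrite mulrCA.
Qed.

Lemma wsubst_comp u g h :
  peq (subst (wsubst u g) h) (wsubst u (fun i => subst (g i) h)).
Proof.
elim: u => [|i u IH] /=.
  by move=> w; rewrite coef_subst big_cons big_nil mul1r addr0.
exact: peq_trans (subst_pmul _ _ _) (pmul_peq (fun w => erefl) IH).
Qed.

Lemma subst_comp p g h : peq (subst (subst p g) h) (subst p (fun i => subst (g i) h)).
Proof.
move=> w; rewrite coef_subst (coef_subst p).
rewrite (sum_subst p g (fun v => coef (wsubst v h) w)).
by apply: eq_bigr => m _; rewrite -coef_subst wsubst_comp.
Qed.

End Substitution.

Section Elementary.
Variable K : fieldType.
Implicit Types (e f : ncpoly K) (g h : 'I_3 -> ncpoly K).

Definition elem (k : 'I_3) (e : ncpoly K) : 'I_3 -> ncpoly K :=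
  fun i => if i == k then padd (pX K k) e else pX K i.

Definition avoids (k : 'I_3) (e : ncpoly K) : Prop :=
  forall w, coef e w != 0 -> k \notin w.

Lemma elem_at k e : elem k e k = padd (pX K k) e.
Proof. by rewrite /elem eqxx. Qed.

Lemma elem_off k e i : i != k -> elem k e i = pX K i.
Proof. by rewrite /elem => /negbTE ->. Qed.

Lemma ord3P (i : 'I_3) : [\/ i = x1, i = x2 | i = x3].
Proof. by case: i => -[|[|[|//]]] ?; [apply: Or31|apply: Or32|apply: Or33]; apply: val_inj. Qed.

Lemma subst_avoids k e g h : avoids k e ->
  (forall i, i != k -> peq (g i) (h i)) -> peq (subst e g) (subst e h).
Proof.
move=> ke gh; apply: subst_peq_support => w /ke kw; apply: wsubst_peq => i iw.
by apply: gh; apply: contraNneq kw => <-.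
Qed.

Lemma subst_avoids_id k e g : avoids k e ->
  (forall i, i != k -> peq (g i) (pX K i)) -> peq (subst e g) e.
Proof. by move=> ke gX; apply: peq_trans (subst_pX_id e); apply: subst_avoids ke gX. Qed.

Lemma subst_elem_avoids k e f : avoids k f -> peq (subst f (elem k e)) f.
Proof. by move=> kf; apply: subst_avoids_id kf _ => i /(elem_off e) ->. Qed.

Lemma K23_avoids f : in_K23 f -> avoids x1 f.
Proof. by move=> Hf w /Hf /allP Hw; apply/negP => /Hw. Qed.

Lemma K3_avoids k f : in_K3 f -> k != x3 -> avoids k f.
Proof.
move=> Hf kx3 w /Hf /allP Hw; apply: contraNN kx3 => /Hw /eqP k2.
by apply/eqP/val_inj.
Qed.

Lemma Kconst_avoids k f : in_Kconst f -> avoids k f.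
Proof. by move=> Hf w /Hf ->. Qed.

Lemma elem_cancel k e e' : avoids k e -> (forall w, coef e w + coef e' w = 0) ->
  forall i, peq (subst (elem k e i) (elem k e')) (pX K i).
Proof.
move=> ke ee' i; have [->|ik] := eqVneq i k; last by rewrite elem_off // => w;
  rewrite (subst_pX i _ w) elem_off.
move=> w; rewrite elem_at coef_subst_pXD elem_at coef_padd.
by rewrite (subst_elem_avoids e' ke) -addrA (addrC (coef e' w)) ee' addr0.
Qed.

Lemma elem_automorphism k e : avoids k e -> is_automorphism (elem k e).
Proof.
move=> ke; exists (elem k (pscale (-1) e)) => i; split; apply: elem_cancel => //.
- by move=> w; rewrite coef_pscale mulN1r oppr_eq0; apply: ke.
- by move=> w; rewrite coef_pscale mulN1r addNr.
- by move=> w; rewrite coef_pscale mulN1r addrN.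
Qed.

Lemma automorphism_endo_eq g h : endo_eq g h ->
  is_automorphism h -> is_automorphism g.
Proof.
move=> gh [psi Hpsi]; exists psi => i; have [H1 H2] := Hpsi i; split.
- by apply: peq_trans H1; apply: subst_peqr.
- by apply: peq_trans H2; apply: subst_peql.
Qed.

Lemma K23_nil : in_K23 ([::] : ncpoly K).
Proof. by move=> w; rewrite coef_nil eqxx. Qed.

Lemma K3_nil : in_K3 ([::] : ncpoly K).
Proof. by move=> w; rewrite coef_nil eqxx. Qed.

Lemma Kconst_nil : in_Kconst ([::] : ncpoly K).
Proof. by move=> w; rewrite coef_nil eqxx. Qed.

Lemma pX_in_K23 i : i != x1 -> in_K23 (pX K i).
Proof.
move=> ix1 w; rewrite coef_pX; case: ifP => [/eqP <- _|]; last by rewrite eqxx.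
by rewrite /= andbT; apply: contraNneq ix1 => i0; apply/eqP/val_inj.
Qed.

Lemma pX_in_K3 : in_K3 (pX K x3).
Proof. by move=> w; rewrite coef_pX; case: ifP => [/eqP <-|]; rewrite ?eqxx. Qed.

Lemma elem1_U3 f : in_K23 f -> in_U3 (elem x1 f).
Proof.
move=> Hf; split; first exact/elem_automorphism/K23_avoids.
exists f, [::], [::]; split; first by split; [|exact: K3_nil|exact: Kconst_nil].
by split; rewrite ?elem_at ?elem_off //; apply: padd_nil.
Qed.

Lemma elem2_U3 f : in_K3 f -> in_U3 (elem x2 f).
Proof.
move=> Hf; split; first exact/elem_automorphism/K3_avoids.
exists [::], f, [::]; split; first by split; [exact: K23_nil| |exact: Kconst_nil].
by split; rewrite ?elem_at ?elem_off //; apply: padd_nil.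
Qed.

Lemma elem3_U3 f : in_Kconst f -> in_U3 (elem x3 f).
Proof.
move=> Hf; split; first exact/elem_automorphism/Kconst_avoids.
exists [::], [::], f; split; first by split; [exact: K23_nil|exact: K3_nil|].
by split; rewrite ?elem_at ?elem_off //; apply: padd_nil.
Qed.

End Elementary.

Section Center.
Variable K : fieldType.
Implicit Types (f : ncpoly K) (phi psi : 'I_3 -> ncpoly K).

Lemma in_U3_endo_eq phi psi : endo_eq phi psi -> in_U3 psi -> in_U3 phi.
Proof.
move=> E [aut [f1 [f2 [f3 [Hf [E1 E2 E3]]]]]].
split; first exact: automorphism_endo_eq aut.
exists f1, f2, f3; split=> //.
by split; [apply: peq_trans E1|apply: peq_trans E2|apply: peq_trans E3].
Qed.

Lemma in_center_U3_endo_eq phi psi : endo_eq phi psi ->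
  in_center_U3 psi -> in_center_U3 phi.
Proof.
move=> E [U C]; split; first exact: in_U3_endo_eq U.
move=> rho /C Crho i; apply: peq_trans (subst_peqr _ E) _.
by apply: peq_trans (Crho i) _; apply/subst_peql/peq_sym.
Qed.

Lemma commute_elem_pX_eq0 phi k j fk fj : j != k -> avoids k fk ->
  peq (phi k) (padd (pX K k) fk) -> peq (phi j) (padd (pX K j) fj) ->
  endo_eq (Defs.comp phi (elem k (pX K j))) (Defs.comp (elem k (pX K j)) phi) ->
  forall w, coef fj w = 0.
Proof.
(* At x_k one side is x_k + f_k + x_j + f_j, the other x_k + x_j + f_k. *)
move=> jk kfk Ek Ej C w; have := C k w; rewrite /Defs.comp elem_at coef_subst_pXD.
rewrite (subst_pX j phi w) (subst_peql _ Ek w) coef_subst_pXD elem_at.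
rewrite (Ek w) (Ej w) (subst_elem_avoids _ kfk) !coef_padd addrACA.
by move/addrI; rewrite -[RHS]addr0 => /addrI.
Qed.

Lemma commute_elem_fixes phi k j e f : j != k ->
  peq (phi j) (padd (pX K j) f) ->
  endo_eq (Defs.comp phi (elem k e)) (Defs.comp (elem k e) phi) ->
  peq (subst f (elem k e)) f.
Proof.
move=> jk Ej C w; have := C j w; rewrite /Defs.comp elem_off // (subst_pX j phi w).
by rewrite (subst_peql _ Ej w) coef_subst_pXD elem_off // (Ej w) coef_padd => /addrI.
Qed.

Lemma in_S_of_elem_fixed f : in_K23 f ->
  (forall g, in_K3 g -> peq (subst f (elem x2 g)) f) ->
  (forall h, in_Kconst h -> peq (subst f (elem x3 h)) f) -> in_S f.
Proof.
move=> Hf fix2 fix3; split=> // g h Hg Hh.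
apply: peq_trans (fix2 g Hg); apply: peq_trans (subst_peql _ (fix3 h Hh)).
apply: peq_trans (peq_sym (subst_comp _ _ _)); apply: subst_peqr => i w.
case: (ord3P i) => ->.
- by rewrite elem_off // (subst_pX _ _ w) elem_off.
- by rewrite elem_off // (subst_pX _ _ w) elem_at.
rewrite elem_at coef_subst_pXD elem_off // (subst_elem_avoids _ (Kconst_avoids _ Hh)).
by rewrite -coef_padd.
Qed.

Lemma center_U3_elem phi : in_center_U3 phi ->
  exists2 f, in_S f & endo_eq phi (elem x1 f).
Proof.
move=> [[_ [f1 [f2 [f3 [[H1 H2 H3] [E1 E2 E3]]]]]] C].
have f2_0 := commute_elem_pX_eq0 (k := x1) (j := x2) isT (K23_avoids H1) E1 E2
  (C _ (elem1_U3 (pX_in_K23 (i := x2) isT))).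
have f3_0 := commute_elem_pX_eq0 (k := x2) (j := x3) isT (K3_avoids H2 (k := x2) isT) E2 E3
  (C _ (elem2_U3 (@pX_in_K3 K))).
exists f1.
  apply: in_S_of_elem_fixed H1 _ _ => [g Hg|h Hh].
    exact: (commute_elem_fixes (k := x2) (j := x1) isT E1 (C _ (elem2_U3 Hg))).
  exact: (commute_elem_fixes (k := x3) (j := x1) isT E1 (C _ (elem3_U3 Hh))).
move=> i w; case: (ord3P i) => ->; rewrite ?elem_at ?elem_off //.
- by rewrite (E2 w) coef_padd f2_0 addr0.
- by rewrite (E3 w) coef_padd f3_0 addr0.
Qed.

Lemma elem1_commute f psi : in_S f -> in_U3 psi ->
  endo_eq (Defs.comp (elem x1 f) psi) (Defs.comp psi (elem x1 f)).
Proof.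
move=> [Hf fixS] [_ [a [b [c [[Ha Hb Hc] [E1 E2 E3]]]]]] i w; rewrite /Defs.comp.
have psi_fixes_f : peq (subst f psi) f.
  apply: peq_trans (fixS b c Hb Hc); apply: subst_avoids (K23_avoids Hf) _ => j.
  by case: (ord3P j) => ->.
have off_x1 j e : j != x1 -> avoids x1 e -> peq (psi j) (padd (pX K j) e) ->
    coef (subst (psi j) (elem x1 f)) w = coef (subst (elem x1 f j) psi) w.
  move=> jx1 ae Ej; rewrite (subst_peql _ Ej w) coef_subst_pXD elem_off //.
  by rewrite (subst_elem_avoids _ ae) (subst_pX _ _ w) (Ej w) coef_padd.
case: (ord3P i) => ->.
- rewrite (subst_peql _ E1 w) !coef_subst_pXD elem_at (subst_elem_avoids _ (K23_avoids Ha)).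
  by rewrite (psi_fixes_f w) (E1 w) !coef_padd addrAC.
- exact: off_x1 (K3_avoids Hb _) E2.
- exact: off_x1 (Kconst_avoids _ Hc) E3.
Qed.

Lemma elem1_center f : in_S f -> in_center_U3 (elem x1 f).
Proof.
move=> Sf; split; first exact: elem1_U3 Sf.1.
by move=> psi /(elem1_commute Sf).
Qed.

End Center.

Unset Implicit Arguments.

Theorem theorem1 (K : fieldType) (charK0 : [pchar K] =i pred0)
  (phi : 'I_3 -> ncpoly K) :
  in_center_U3 phi <->
  exists f1 : ncpoly K,
    in_S f1 /\
    endo_eq phi (fun i => if i == x1 then padd (pX K x1) f1 else pX K i).
Proof.
split.
- by move=> /center_U3_elem [f Sf Ef]; exists f.
- by move=> [f [Sf Ef]]; apply: in_center_U3_endo_eq Ef (elem1_center Sf).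
Qed.
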